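(* Let $\Omega\subset\{1,\dots,|\mathcal{Y}|\}$ with $|\Omega|=|\mathcal{X}|$ be such that $M_\Omega$ is invertible. Then $\mathbf{1}^T\left(M_{\Omega}^{-1}MP_Y\right)=1$. Furthermore, for every $J_u\in\mathbb{R}^{|\mathcal{X}|}$ with $\sum_x J_u(x)=0$, $\mathbf{1}^T\left(M_{\Omega}^{-1}M\begin{bmatrix}P_{X|Y_1}^{-1}J_u\\0\end{bmatrix}\right)=0$.
   Context: Setting: $X,Y$ on finite alphabets with $|\mathcal{X}|<|\mathcal{Y}|$, joint pmf $P_{XY}$ with marginal vectors $P_X,P_Y$ having positive entries. $P_{X|Y}\in\mathbb{R}^{|\mathcal{X}|\times|\mathcal{Y}|}$ (columns are the conditional distributions $P_{X|Y=y}$) has full row rank, with $P_{X|Y}=[P_{X|Y_1},P_{X|Y_2}]$ where $P_{X|Y_1}$ (the first $|\mathcal{X}|$ columns) is invertible. With an SVD $P_{X|Y}=U\Sigma V^T$, $V=[v_1,\dots,v_{|\mathcal{Y}|}]$, set $M=[v_1,\dots,v_{|\mathcal{X}|}]^T$. $M_\Omega\in\mathbb{R}^{|\mathcal{X}|\times|\mathcal{X}|}$ is the submatrix of $M$ formed by the columns indexed by $\Omega$ (in increasing order). The zero block has size $|\mathcal{Y}|-|\mathcal{X}|$; $\mathbf{1}$ is the all-ones vector. *)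

From HB Require Import structures.
From mathcomp Require Import all_boot all_order all_algebra.
Set Implicit Arguments. Unset Strict Implicit. Unset Printing Implicit Defensive.
Import Order.TTheory GRing.Theory Num.Theory.
Local Open Scope ring_scope.

(* Alphabets: X = 'I_n, Y = 'I_(n + k) (so |X| < |Y| iff 0 < k). *)

Definition marginalX (R : ringType) (n m : nat) (P : 'M[R]_(n, m)) : 'cV[R]_n :=
  \col_(x < n) \sum_(y < m) P x y.

Definition marginalY (R : ringType) (n m : nat) (P : 'M[R]_(n, m)) : 'cV[R]_m :=
  \col_(y < m) \sum_(x < n) P x y.

Definition condXY (R : fieldType) (n m : nat) (P : 'M[R]_(n, m)) : 'M[R]_(n, m) :=
  \matrix_(x < n, y < m) (P x y / marginalY P y 0).

(* M = [v_1, ..., v_n]^T : first n columns of V, transposed. *)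
Definition Mmat (R : ringType) (n k : nat) (V : 'M[R]_(n + k)) : 'M[R]_(n, n + k) :=
  (lsubmx V)^T.

(* M_Omega: the columns of M indexed by Omega, in increasing order
   (enum of a set of ordinals lists its elements in increasing order).
   The default value of nth is irrelevant when #|Om| = n. *)
Definition Msub (R : ringType) (n k : nat) (M : 'M[R]_(n, n + k))
    (Om : {set 'I_(n + k)}) : 'M[R]_n :=
  \matrix_(i < n, j < n) M i (nth (lshift k j) (enum Om) j).

Definition sum_col (R : ringType) (m : nat) (v : 'cV[R]_m) : R :=
  \sum_(i < m) v i 0.

From HB Require Import structures.
From mathcomp Require Import all_boot all_order all_algebra.
Import Order.TTheory GRing.Theory Num.Theory.
Local Open Scope ring_scope.

(* Every column of P_{X|Y} sums to one, so 1^T = 1^T P_{X|Y} = (1^T U S_1) M,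
   where S_1 is the (only nonzero) left block of S: the all-ones row is a
   combination a M of the rows of M.  Taking the columns in Omega gives
   a M_Omega = 1^T, hence 1^T M_Omega^-1 M = a M = 1^T, i.e. left
   multiplication by M_Omega^-1 M preserves column sums.  Both claims then
   reduce to column sums of P_Y (total mass 1) and of P_{X|Y_1}^-1 J_u, which
   equals that of J_u because 1^T P_{X|Y_1} = 1^T as well.  Orthogonality of
   U and V and the ordering of the singular values play no role. *)

Lemma sum_colE {R : nzRingType} {m : nat} (v : 'cV[R]_m) :
  sum_col v = ((const_mx 1 : 'rV[R]_m) *m v) 0 0.
Proof. by rewrite mxE; apply: eq_bigr => i _; rewrite mxE mul1r. Qed.

Lemma sum_col_col_mx0 {R : nzRingType} {m k : nat} (u : 'cV[R]_m) :
  sum_col (col_mx u (0 : 'cV[R]_k)) = sum_col u.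
Proof.
rewrite /sum_col big_split_ord /= [X in _ + X]big1 => [|i _]; last first.
  by rewrite col_mxEd mxE.
by rewrite addr0; apply: eq_bigr => i _; rewrite col_mxEu.
Qed.

Lemma sum_col_marginalY {R : nzRingType} {n m : nat} (P : 'M[R]_(n, m)) :
  sum_col (marginalY P) = \sum_(x < n) \sum_(y < m) P x y.
Proof. by rewrite /sum_col exchange_big; apply: eq_bigr => y _; rewrite mxE. Qed.

Lemma colsub_const_mx {R : Type} {r m n : nat} (g : 'I_n -> 'I_m) (a : R) :
  colsub g (const_mx a : 'M_(r, m)) = const_mx a.
Proof. by apply/matrixP => i j; rewrite !mxE. Qed.

Lemma Msub_colsub {R : nzRingType} {n k : nat} (M : 'M[R]_(n, n + k))
    (Om : {set 'I_(n + k)}) :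
  Msub M Om = colsub (fun j => nth (lshift k j) (enum Om) j) M.
Proof. by []. Qed.

Lemma condXY_col_sums {R : fieldType} {n m : nat} {P : 'M[R]_(n, m)} :
  (forall y, marginalY P y 0 != 0) ->
  (const_mx 1 : 'rV[R]_n) *m condXY P = const_mx 1.
Proof.
move=> PY_neq0; apply/matrixP => i y; rewrite !mxE.
under eq_bigr do rewrite !mxE mul1r.
by rewrite -mulr_suml divff //; have := PY_neq0 y; rewrite mxE.
Qed.

Lemma rsubmx_diag0 {R : nzRingType} {n k : nat} (S : 'M[R]_(n, n + k)) :
  (forall (i : 'I_n) (j : 'I_(n + k)), val i != val j -> S i j = 0) ->
  rsubmx S = 0.
Proof.
move=> S_diag; apply/matrixP => i j; rewrite !mxE S_diag //=.
by rewrite neq_ltn (leq_trans (ltn_ord i)) ?leq_addr.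
Qed.

Lemma mulmx_trmx_rsubmx0 {R : nzRingType} {m n p q r : nat} (A : 'M[R]_(m, n))
    (S : 'M[R]_(n, p + q)) (V : 'M[R]_(r, p + q)) :
  rsubmx S = 0 -> A *m S *m V^T = A *m lsubmx S *m (lsubmx V)^T.
Proof.
move=> S_r0; rewrite -{1}(hsubmxK S) S_r0 -{1}(hsubmxK V) tr_row_mx.
by rewrite -!mulmxA mul_row_col mul0mx addr0.
Qed.

Lemma colsub_mulmx_invmx {R : comUnitRingType} {n m : nat} (a : 'rV[R]_n)
    (M : 'M[R]_(n, m)) (g : 'I_n -> 'I_m) :
  colsub g M \in unitmx -> colsub g (a *m M) *m invmx (colsub g M) *m M = a *m M.
Proof. by move=> Mg_unit; rewrite -mulmx_colsub mulmxK. Qed.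

Lemma sum_col_invmx_colsub {R : comUnitRingType} {n m : nat} {a : 'rV[R]_n}
    {M : 'M[R]_(n, m)} {g : 'I_n -> 'I_m} {z : 'cV[R]_m} :
  (const_mx 1 : 'rV[R]_m) = a *m M -> colsub g M \in unitmx ->
  sum_col (invmx (colsub g M) *m M *m z) = sum_col z.
Proof.
move=> one_aM Mg_unit; rewrite !sum_colE !mulmxA.
by rewrite -(colsub_const_mx g) one_aM colsub_mulmx_invmx.
Qed.

Lemma sum_col_invmx {R : comUnitRingType} {n : nat} (L : 'M[R]_n) (v : 'cV[R]_n) :
  L \in unitmx -> (const_mx 1 : 'rV[R]_n) *m L = const_mx 1 ->
  sum_col (invmx L *m v) = sum_col v.
Proof. by move=> L_unit one_L; rewrite !sum_colE mulmxA -{1}one_L mulmxK. Qed.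

Theorem proposition4 (R : realFieldType) (n k : nat) (P : 'M[R]_(n, n + k))
    (U : 'M[R]_n) (S : 'M[R]_(n, n + k)) (V : 'M[R]_(n + k))
    (Om : {set 'I_(n + k)}) :
  (0 < k)%N ->
  (* P is a joint pmf with positive marginals *)
  (forall x y, 0 <= P x y) ->
  \sum_(x < n) \sum_(y < n + k) P x y = 1 ->
  (forall x, 0 < marginalX P x 0) ->
  (forall y, 0 < marginalY P y 0) ->
  (* P_{X|Y} has full row rank and its first n columns form an invertible matrix *)
  \rank (condXY P) = n ->
  lsubmx (condXY P) \in unitmx ->
  (* SVD  P_{X|Y} = U S V^T *)
  U^T *m U = 1%:M ->
  V^T *m V = 1%:M ->
  (forall (i : 'I_n) (j : 'I_(n + k)), val i != val j -> S i j = 0) ->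
  (forall i : 'I_n, 0 <= S i (lshift k i)) ->
  (forall i j : 'I_n, (i <= j)%N -> S j (lshift k j) <= S i (lshift k i)) ->
  condXY P = U *m S *m V^T ->
  (* Omega *)
  #|Om| = n ->
  Msub (Mmat V) Om \in unitmx ->
  sum_col (invmx (Msub (Mmat V) Om) *m Mmat V *m marginalY P) = 1 /\
  (forall Ju : 'cV[R]_n, \sum_(x < n) Ju x 0 = 0 ->
     sum_col (invmx (Msub (Mmat V) Om) *m Mmat V
                *m col_mx (invmx (lsubmx (condXY P)) *m Ju) (0 : 'cV[R]_k)) = 0).
Proof.
move=> _ _ P_mass _ PY_gt0 _ L_unit _ _ S_diag _ _ svd _ MOm_unit.
have col_sums := condXY_col_sums (fun y => lt0r_neq0 (PY_gt0 y)).
have one_rowM : const_mx 1 = (const_mx 1 : 'rV[R]_n) *m (U *m lsubmx S) *m Mmat V.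
  by rewrite -mulmxA -mulmx_trmx_rsubmx0 ?rsubmx_diag0 // -svd col_sums.
have sum_col_MOm z : sum_col (invmx (Msub (Mmat V) Om) *m Mmat V *m z) = sum_col z.
  by rewrite Msub_colsub (sum_col_invmx_colsub one_rowM) -?Msub_colsub.
split; first by rewrite sum_col_MOm sum_col_marginalY P_mass.
move=> Ju Ju_sum0; rewrite sum_col_MOm sum_col_col_mx0 sum_col_invmx //.
by rewrite mulmx_lsub col_sums lsubmxEsub colsub_const_mx.
Qed.
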